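(* There is an absolute constant $c>0$ such that for all integers $k\ge1$, all $n\le m$ and every $k$-monotone sequence $X\in[n]^m$, $\mathsf{F}^{k}(X)\le c\,k\cdot|X|$.
   Context: A sequence $X\in[n]^m$ is $k$-monotone if it can be partitioned into $k$ (not necessarily contiguous) subsequences that are all increasing or all decreasing. Standing assumption: $m\ge n$. $k$-finger cost: for a static BST $T$ on $[n]$, $d_T(a,b)$ is the number of edges between $a$ and $b$ in $T$. A $k$-finger strategy is an initial vector $\vec\ell\in[n]^k$ and $\vec f\in[k]^m$, finger $f_t$ serving $x_t$, with cost $\sum_{t=1}^m(1+d_T(x_t,p_t))$ where $p_t$ is the position of finger $f_t$ before time $t$ (its last served key, or $\ell_{f_t}$). $\mathsf{F}^k_T(X)$ is the minimum such cost and $\mathsf{F}^k(X)=\min_T\mathsf{F}^k_T(X)$ over BSTs $T$ on $[n]$. *)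

From mathcomp Require Import all_boot.
Set Implicit Arguments. Unset Strict Implicit. Unset Printing Implicit Defensive.

Inductive tree := Leaf | Node of tree & nat & tree.

Fixpoint inorder (t : tree) : seq nat :=
  match t with Leaf => [::] | Node l k r => inorder l ++ k :: inorder r end.

(* A (static) BST on [n] = {1,...,n}: its in-order traversal is 1,2,...,n
   (this forces the search-tree property and that the key set is exactly [n]). *)
Definition is_bst_on (n : nat) (t : tree) : Prop := inorder t = iota 1 n.

Fixpoint spath (t : tree) (x : nat) : seq nat :=
  match t with
  | Leaf => [::]
  | Node l k r =>
      k :: (if x < k then spath l x else if k < x then spath r x else [::])
  end.

Fixpoint lcp (s1 s2 : seq nat) : nat :=
  match s1, s2 with
  | a :: s1', b :: s2' => if a == b then (lcp s1' s2').+1 else 0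
  | _, _ => 0
  end.

(* d_T(a,b): number of edges on the tree path between nodes a and b
   = depth a + depth b - 2 depth(lca a b). *)
Definition dist (t : tree) (a b : nat) : nat :=
  let pa := spath t a in let pb := spath t b in
  (size pa - lcp pa pb) + (size pb - lcp pa pb).

(* Cost of serving X with finger assignment F, current finger positions pos
   (pos`_i = position of finger i), charging 1 + d_T(x_t, p_t) per access. *)
Fixpoint finger_cost (t : tree) (pos : seq nat) (X F : seq nat) : nat :=
  match X, F with
  | x :: X', f :: F' =>
      1 + dist t x (nth 0 pos f) + finger_cost t (set_nth 0 pos f x) X' F'
  | _, _ => 0
  end.

(* A k-finger strategy on T for X: initial vector l in [n]^k and f in [k]^m
   (fingers indexed 0..k-1). *)
Definition valid_strategy (n k : nat) (X l F : seq nat) : Prop :=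
  size l = k /\ all (fun p => (1 <= p <= n)) l /\
  size F = size X /\ all (fun f => f < k) F.

(* "F^k(X) <= B": some BST T on [n] and some k-finger strategy on T serve X
   at cost at most B (equivalently, min_T min_strategy cost <= B). *)
Definition Fk_le (n k : nat) (X : seq nat) (B : nat) : Prop :=
  exists (t : tree) (l F : seq nat),
    is_bst_on n t /\ valid_strategy n k X l F /\ finger_cost t l X F <= B.

Definition in_range (n : nat) (X : seq nat) : bool := all (fun x => 1 <= x <= n) X.

(* k-monotone: a colouring of positions by k colours such that every colour
   class (as a subsequence of X) is increasing, or every class is decreasing. *)
Definition k_monotone (k : nat) (X : seq nat) : Prop :=
  exists cols : seq nat,
    size cols = size X /\ all (fun c => c < k) cols /\
    ((forall c, c < k -> sorted leq (mask [seq d == c | d <- cols] X)) \/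
     (forall c, c < k -> sorted geq (mask [seq d == c | d <- cols] X))).

(** The path-shaped BST whose root is 1 and in which every key k has k+1 as
    right child realises d_T(a, b) = |a - b|.  A finger that only moves in one
    direction then pays, over the whole sequence, at most the distance to the
    far end of [n]: with the potential n - p (increasing case, all fingers
    starting at 1) or p (decreasing case, all fingers starting at n), each
    access costs at most 1 plus the drop in potential.  Hence the cost is at most
    m + k n <= 2 k m. *)
From mathcomp Require Import all_boot zify.

Set Implicit Arguments.
Unset Strict Implicit.
Unset Printing Implicit Defensive.

Fixpoint right_chain (i n : nat) : tree :=
  if n is n'.+1 then Node Leaf i (right_chain i.+1 n') else Leaf.

Lemma inorder_right_chain i n : inorder (right_chain i n) = iota i n.
Proof. by elim: n i => [|n IHn] i //=; rewrite IHn. Qed.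

Lemma spath_right_chain i n x :
  i <= x < i + n -> spath (right_chain i n) x = iota i (x - i).+1.
Proof.
elim: n i => [|n IHn] i /=; first lia.
move=> x_in; rewrite ltnNge (_ : i <= x) //=; last lia.
case: ltnP => [lt_ix | le_xi]; last by have -> : x - i = 0 by lia.
by rewrite IHn; [congr (_ :: iota _ _) | ]; lia.
Qed.

Lemma lcp_iota i p q : lcp (iota i p) (iota i q) = minn p q.
Proof. by elim: p q i => [|p IHp] [|q] i //=; rewrite eqxx IHp; lia. Qed.

Lemma dist_right_chain i n a b : i <= a < i + n -> i <= b < i + n ->
  dist (right_chain i n) a b = (a - b) + (b - a).
Proof.
move=> a_in b_in; rewrite /dist !spath_right_chain // lcp_iota !size_iota; lia.
Qed.

Lemma sumn_map_set_nth (f : nat -> nat) s c x : c < size s ->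
  sumn (map f (set_nth 0 s c x)) + f (nth 0 s c) = sumn (map f s) + f x.
Proof. by elim: s c => [|y s IHs] [|c] //= => [_ | /IHs]; lia. Qed.

Lemma all_set_nth (P : pred nat) s c x : c < size s ->
  all P s -> P x -> all P (set_nth 0 s c x).
Proof.
move=> lt_c Ps Px; apply/(all_nthP 0) => j.
rewrite size_set_nth (maxn_idPr lt_c) nth_set_nth /= => lt_j.
by case: eqP => // _; apply: (all_nthP 0 Ps).
Qed.

Section Potential.

Variables (t : tree) (P : pred nat) (e : rel nat) (phi : nat -> nat).

Hypothesis dist_le_potential_drop :
  {in P &, forall p x, e p x -> dist t x p + phi x <= phi p}.

Lemma finger_cost_le_potential (pos X F : seq nat) :
  all P pos -> all P X -> all (fun f => f < size pos) F -> size F = size X ->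
  (forall c, c < size pos -> path e (nth 0 pos c) (mask [seq d == c | d <- F] X)) ->
  finger_cost t pos X F <= size X + sumn (map phi pos).
Proof.
elim: X F pos => [|x X IHX] [|f F] pos //= Ppos /andP[Px PX] /andP[f_lt F_lt].
move=> [sizeF] paths; set p := nth 0 pos f.
have Pp : P p by apply: (all_nthP 0 Ppos).
have e_px : e p x by have := paths f f_lt; rewrite eqxx /= => /andP[].
have step : dist t x p + phi x <= phi p by exact: dist_le_potential_drop.
have shift := sumn_map_set_nth phi x f_lt.
have size_pos' : size (set_nth 0 pos f x) = size pos.
  by rewrite size_set_nth; apply/maxn_idPr.
have IH : finger_cost t (set_nth 0 pos f x) X F
           <= size X + sumn (map phi (set_nth 0 pos f x)).
  apply: IHX; rewrite ?size_pos' ?all_set_nth // => c c_lt.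
  have := paths c c_lt; rewrite nth_set_nth /=.
  by have [-> /andP[] |] := eqVneq c f.
by rewrite -/p in shift; lia.
Qed.

End Potential.

Lemma Fk_le_monotone_fingers n k X cols (e : rel nat) (phi : nat -> nat) p B :
  1 <= p <= n -> in_range n X -> transitive e -> all (e p) X ->
  size cols = size X -> all (fun c => c < k) cols ->
  (forall c, c < k -> sorted e (mask [seq d == c | d <- cols] X)) ->
  {in fun a => 1 <= a <= n &, forall a b, e a b ->
     dist (right_chain 1 n) b a + phi b <= phi a} ->
  size X + k * phi p <= B -> Fk_le n k X B.
Proof.
move=> p_in X_in e_tr eX size_cols cols_lt sorted_cols dist_drop le_B.
have start_in : all (fun a => 1 <= a <= n) (nseq k p) by rewrite all_nseq p_in orbT.
exists (right_chain 1 n), (nseq k p), cols.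
split; first exact: inorder_right_chain.
split; first by repeat split; rewrite ?size_nseq.
have cols_lt' : all (fun c => c < size (nseq k p)) cols by rewrite size_nseq.
have paths c : c < size (nseq k p) ->
    path e (nth 0 (nseq k p) c) (mask [seq d == c | d <- cols] X).
  rewrite size_nseq => c_lt; rewrite nth_nseq c_lt (path_sortedE e_tr).
  by rewrite sorted_cols // andbT all_mask.
apply: leq_trans le_B.
have := finger_cost_le_potential dist_drop start_in X_in cols_lt' size_cols paths.
by rewrite map_nseq sumn_nseq mulnC.
Qed.

Theorem theorem11 :
  exists c : nat, 0 < c /\
    forall (k n m : nat) (X : seq nat),
      1 <= k -> 1 <= n -> n <= m ->
      size X = m -> in_range n X -> k_monotone k X ->
      Fk_le n k X (c * k * size X).
Proof.
exists 2; split => // k n m X k_gt0 n_gt0 le_nm size_X X_in.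
have X_bound := sub_all _ X_in.
case=> cols [size_cols [cols_lt [incr | decr]]].
- apply: (Fk_le_monotone_fingers (phi := fun a => n - a) (p := 1) _ X_in leq_trans
    _ size_cols cols_lt incr); [lia | | | nia].
  + by apply: X_bound => x /andP[].
  + by move=> a b a_in b_in le_ab; rewrite dist_right_chain //; lia.
- apply: (Fk_le_monotone_fingers (phi := id) (p := n) _ X_in (rev_trans leq_trans)
    _ size_cols cols_lt decr); [lia | | | nia].
  + by apply: X_bound => x /andP[].
  + by move=> a b a_in b_in le_ba; rewrite dist_right_chain //; lia.
Qed.
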